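(* Let $\Sigma\in\mathcal{G}_n$, let $S=S(\Sigma)$, $W=W(\Sigma)$, and let $Q_0$ be the unique regular rational orthogonal matrix with $Q_0^{\rm T}SQ_0=S(\Sigma^{\rm T})$, with level $\ell_0$. Let $p$ be an odd prime with $p\nmid\ell_0$. If $z$ is an integral vector with $W^{\rm T}z\equiv0\pmod p$, then $S^{\rm T}z\equiv0\pmod p$.
   Context: An oriented graph on vertices $v_1,\dots,v_n$ is a simple graph with each edge directed; its skew-adjacency matrix $S(\Sigma)=(s_{ij})$ has $s_{ij}=1$ if $(v_i,v_j)$ is an arc, $-1$ if $(v_j,v_i)$ is an arc, $0$ otherwise. The converse $\Sigma^{\rm T}$ reverses every arc, so $S(\Sigma^{\rm T})=-S(\Sigma)$. With $e$ the all-one vector, $W(\Sigma)=[e,Se,\dots,S^{n-1}e]$. $\mathcal{G}_n$ is the set of $n$-vertex oriented graphs with $2^{-\lfloor n/2\rfloor}\det W(\Sigma)$ an odd square-free integer. A rational orthogonal matrix $Q$ is regular if $Qe=e$; its level is the least positive integer $k$ with $kQ$ integral. Since $\det W(\Sigma)\ne0$, $Q_0$ exists and is unique. *)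

From HB Require Import structures.
From mathcomp Require Import all_boot all_order all_algebra.
Set Implicit Arguments. Unset Strict Implicit. Unset Printing Implicit Defensive.
Import Order.TTheory GRing.Theory Num.Theory.
Local Open Scope ring_scope.

Definition oriented_graph (n : nat) (arc : rel 'I_n) : Prop :=
  (forall i, ~~ arc i i) /\ (forall i j, arc i j -> ~~ arc j i).

Definition skew_adj (n : nat) (arc : rel 'I_n) : 'M[int]_n :=
  \matrix_(i, j) (if arc i j then 1 else if arc j i then -1 else 0).

Definition converse (n : nat) (arc : rel 'I_n) : rel 'I_n := fun i j => arc j i.

Definition ones (R : nzRingType) (n : nat) : 'cV[R]_n := const_mx 1.

Definition walk_matrix (n : nat) (S : 'M[int]_n) : 'M[int]_n :=
  \matrix_(i, j) (iter j (mulmx S) (ones int n)) i ord0.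

Definition squarefree_int (d : int) : Prop :=
  forall p : nat, prime p -> ~ ((p ^ 2)%:Z %| d)%Z.

Definition in_G (n : nat) (arc : rel 'I_n) : Prop :=
  exists d : int,
    \det (walk_matrix (skew_adj arc)) = (2 ^ (n./2))%:Z * d
    /\ odd `|d|%N /\ squarefree_int d.

Definition orthogonal_mx (n : nat) (Q : 'M[rat]_n) : Prop := Q^T *m Q = 1%:M.
Definition regular_mx (n : nat) (Q : 'M[rat]_n) : Prop := Q *m ones rat n = ones rat n.

Definition integral_mx (n : nat) (A : 'M[rat]_n) : Prop :=
  forall i j, exists z : int, A i j = z%:~R.

Definition is_level (n : nat) (Q : 'M[rat]_n) (l : nat) : Prop :=
  (0 < l)%N /\ integral_mx (l%:R *: Q) /\
  (forall k : nat, (0 < k)%N -> integral_mx (k%:R *: Q) -> (l <= k)%N).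

Definition zero_mod (n : nat) (p : nat) (v : 'cV[int]_n) : Prop :=
  forall i, (p%:Z %| v i ord0)%Z.

From HB Require Import structures.
From mathcomp Require Import all_boot all_order all_algebra.
Import Order.TTheory GRing.Theory Num.Theory.
Local Open Scope ring_scope.
Set Implicit Arguments. Unset Strict Implicit.

(* Reduce modulo p.  Since p^2 does not divide det W, the Smith normal form
   shows that the kernel of W^T over F_p is at most a line.  This kernel is
   orthogonal to every S^j e, hence (Cayley-Hamilton) stable under S^T; and as
   Q := l0 Q0 is integral with Q^T S = - S Q^T and Q^T e = l0 e, it is also
   stable under Q.  A nonzero z in it is therefore a common eigenvector of the
   anticommuting S^T and Q, so the product of the two eigenvalues vanishes when
   p is odd.  Since Q^T Q = l0^2 and p does not divide l0, Q is invertible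
   modulo p, so the eigenvalue of S^T is 0. *)

Definition krylov_mx (R : pzRingType) n (A : 'M[R]_n) (v : 'cV[R]_n) : 'M[R]_n :=
  \matrix_(i, j) (A ^+ j *m v) i 0.

Lemma iter_mulmx (R : pzRingType) n (A : 'M[R]_n) (v : 'cV[R]_n) j :
  iter j (mulmx A) v = A ^+ j *m v.
Proof. by elim: j => [|j /= ->]; rewrite ?expr0 ?mul1mx // exprS mulmxA. Qed.

Lemma walk_matrixE n (S : 'M[int]_n) : walk_matrix S = krylov_mx S (ones int n).
Proof. by apply/matrixP => i j; rewrite mxE [RHS]mxE iter_mulmx. Qed.

Lemma map_ones (R R' : nzRingType) (f : {rmorphism R -> R'}) n :
  map_mx f (ones R n) = ones R' n.
Proof. by rewrite map_const_mx rmorph1. Qed.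

Lemma map_krylov_mx (R R' : pzRingType) (f : {rmorphism R -> R'}) n
    (A : 'M[R]_n) (v : 'cV[R]_n) :
  map_mx f (krylov_mx A v) = krylov_mx (map_mx f A) (map_mx f v).
Proof.
apply/matrixP => i j; rewrite [LHS]mxE [RHS]mxE [in LHS]mxE.
have -> : map_mx f A ^+ j = map_mx f (A ^+ j) by rewrite rmorphXn.
by rewrite -map_mxM [RHS]mxE.
Qed.

Lemma krylov_tr_kerP (R : pzRingType) n (A : 'M[R]_n) (v x : 'cV[R]_n) :
  (krylov_mx A v)^T *m x = 0 <-> forall j : 'I_n, (A ^+ j *m v)^T *m x = 0.
Proof.
have colK j : col j (krylov_mx A v) = A ^+ j *m v by apply/colP => i; rewrite !mxE.
split=> [Kx j | Kx].
  by have := congr1 (row j) Kx; rewrite row_mul -tr_col colK row0.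
by apply/row_matrixP => j; rewrite row_mul -tr_col colK Kx row0.
Qed.

Lemma horner_mx_sum (R : comNzRingType) n (A : 'M[R]_n.+1) (q : {poly R}) k :
  (size q <= k)%N -> horner_mx A q = \sum_(i < k) q`_i *: A ^+ i.
Proof.
move=> le_qk; rewrite [in LHS](_ : q = \poly_(i < k) q`_i); last first.
  apply/polyP => i; rewrite coef_poly; case: ltnP => // le_ki.
  exact: nth_default (leq_trans le_qk le_ki).
rewrite poly_def rmorph_sum /=; apply: eq_bigr => i _.
by rewrite linearZ /= rmorphXn /= horner_mx_X.
Qed.

Lemma krylov_tr_ker_exp (F : fieldType) n (A : 'M[F]_n.+1) (v x : 'cV[F]_n.+1) :
  (krylov_mx A v)^T *m x = 0 -> forall j, (A ^+ j *m v)^T *m x = 0.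
Proof.
move=> /krylov_tr_kerP Kx j.
have -> : A ^+ j = horner_mx A ('X^j %% char_poly A).
  rewrite -[A in A ^+ j]horner_mx_X -rmorphXn /= {1}(divp_eq ('X^j) (char_poly A)).
  by rewrite rmorphD rmorphM /= Cayley_Hamilton mulr0 add0r.
have le_rn : (size ('X^j %% char_poly A)%R <= n.+1)%N.
  by rewrite -ltnS -(size_char_poly A) ltn_modp -size_poly_eq0 size_char_poly.
rewrite (horner_mx_sum _ le_rn) mulmx_suml linear_sum mulmx_suml big1 // => i _.
by rewrite -scalemxAl linearZ /= -scalemxAl Kx scaler0.
Qed.

Lemma krylov_tr_ker_mulmx (F : fieldType) n (A : 'M[F]_n.+1) (v x : 'cV[F]_n.+1) :
  (krylov_mx A v)^T *m x = 0 -> (krylov_mx A v)^T *m (A^T *m x) = 0.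
Proof.
move=> Kx; apply/krylov_tr_kerP => j.
by rewrite mulmxA -trmx_mul mulmxA -[A *m _]/(A * _) -exprS krylov_tr_ker_exp.
Qed.

Lemma anticomm_exp (R : pzRingType) n (A B : 'M[R]_n) j :
  B *m A = - (A *m B) -> B *m A ^+ j = (-1) ^+ j *: (A ^+ j *m B).
Proof.
move=> BA; elim: j => [|j IH]; first by rewrite !expr0 scale1r mulmx1 mul1mx.
rewrite exprSr [_ *m (_ * _)]mulmxA IH -scalemxAl -mulmxA BA mulmxN mulmxA.
by rewrite exprS mulN1r scaleNr scalerN.
Qed.

Lemma krylov_tr_ker_anticomm (R : comPzRingType) n (A B : 'M[R]_n)
    (v x : 'cV[R]_n) (c : R) :
  B *m A = - (A *m B) -> B *m v = c *: v ->
  (krylov_mx A v)^T *m x = 0 -> (krylov_mx A v)^T *m (B^T *m x) = 0.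
Proof.
move=> BA Bv /krylov_tr_kerP Kx; apply/krylov_tr_kerP => j.
rewrite mulmxA -trmx_mul mulmxA anticomm_exp // -scalemxAl -mulmxA Bv.
by rewrite -scalemxAr scalerA linearZ /= -scalemxAl Kx scaler0.
Qed.

Lemma anticomm_eigen_mul_eq0 (F : fieldType) n (A B : 'M[F]_n) (x : 'cV[F]_n) a b :
  2 != 0 :> F -> A *m B = - (B *m A) -> A *m x = a *: x -> B *m x = b *: x ->
  x != 0 -> a * b = 0.
Proof.
move=> two_nz AB Ax Bx x_nz.
have : (a * b) *: x = - ((a * b) *: x).
  have := congr1 (mulmx^~ x) AB.
  by rewrite mulNmx -!mulmxA Bx Ax -!scalemxAr Ax Bx !scalerA [b * a]mulrC.
move/eqP; rewrite -subr_eq0 opprK -scalerDl scaler_eq0 (negbTE x_nz) orbF.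
by rewrite -mulr2n -mulr_natr mulf_eq0 (negbTE two_nz) orbF => /eqP.
Qed.

Lemma anticomm_krylov_tr_ker (F : fieldType) n (S Q : 'M[F]_n.+1)
    (v z : 'cV[F]_n.+1) c :
  2 != 0 :> F ->
  (forall x y : 'cV_n.+1, (krylov_mx S v)^T *m x = 0 ->
     (krylov_mx S v)^T *m y = 0 -> x != 0 -> exists a, y = a *: x) ->
  Q^T *m S = - (S *m Q^T) -> Q^T *m v = c *: v -> Q \in unitmx ->
  (krylov_mx S v)^T *m z = 0 -> S^T *m z = 0.
Proof.
move=> two_nz Kline QS Qv Qu Kz.
have [-> | z_nz] := eqVneq z 0; first by rewrite mulmx0.
have [a Sz] := Kline _ _ Kz (krylov_tr_ker_mulmx Kz) z_nz.
have [b Qz] : exists b, Q *m z = b *: z.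
  apply: (Kline _ _ Kz _ z_nz); rewrite -[Q]trmxK.
  exact: krylov_tr_ker_anticomm QS Qv Kz.
have SQ : S^T *m Q = - (Q *m S^T).
  by rewrite -[Q in S^T *m Q]trmxK -trmx_mul QS linearN /= trmx_mul trmxK.
have /eqP := anticomm_eigen_mul_eq0 two_nz SQ Sz Qz z_nz.
rewrite mulf_eq0 => /orP [/eqP a0 | /eqP b0]; first by rewrite Sz a0 scale0r.
by move: z_nz; rewrite -(mulKmx Qu z) Qz b0 scale0r mulmx0 eqxx.
Qed.

Lemma sorted_dvdz_ndvd (d : seq int) m (p : nat) :
  sorted dvdz d -> ~ ((p ^ 2)%:Z %| \prod_(j < m.+1) d`_j)%Z ->
  forall i : 'I_m.+1, i != ord_max -> ~~ (p%:Z %| d`_i)%Z.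
Proof.
move=> sd p2_ndvd i i_max; apply/negP => p_di; apply: p2_ndvd.
have lt_im : (i < m)%N.
  rewrite ltn_neqAle -ltnS ltn_ord andbT.
  by apply: contra i_max => /eqP im; apply/eqP/val_inj.
have di_dm : (d`_i %| d`_m)%Z.
  have [lt_ms | le_sm] := ltnP m (size d).
    apply: (sorted_ltn_nth dvdz_trans 0 sd) => //.
    by rewrite inE (ltn_trans lt_im lt_ms).
  by rewrite (nth_default _ le_sm) dvdz0.
have p2_didm : ((p ^ 2)%:Z %| d`_i * d`_m)%Z.
  by rewrite expnS expn1 PoszM dvdz_mul // (dvdz_trans p_di di_dm).
apply: dvdz_trans p2_didm _.
rewrite (bigD1 ord_max) //= (bigD1 i) //= mulrA [d`_m * _]mulrC.
exact: dvdz_mulr.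
Qed.

Lemma ker_modp_colinear m (M : 'M[int]_m.+1) p :
  prime p -> ~ ((p ^ 2)%:Z %| \det M)%Z ->
  forall x y : 'cV['F_p]_m.+1, map_mx intr M *m x = 0 -> map_mx intr M *m y = 0 ->
    x != 0 -> exists a, y = a *: x.
Proof.
move=> p_pr p2_ndvd.
have [L uL [R uR [d sd defM]]] := int_Smith_normal_form M.
have {}defM : M = L *m diag_mx (\row_i d`_i) *m R.
  by rewrite defM; congr (_ *m _ *m _); apply/matrixP => i j; rewrite !mxE.
have dvd_det : (\prod_(j < m.+1) d`_j %| \det M)%Z.
  rewrite defM !det_mulmx det_diag; under eq_bigr do rewrite mxE.
  exact/dvdz_mulr/dvdz_mull.
(* Only the last invariant factor can vanish mod p, so in the coordinates
   given by R the kernel of M mod p lies on the last axis. *)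
have d_ndvd := sorted_dvdz_ndvd sd (fun h => p2_ndvd (dvdz_trans h dvd_det)).
set Lp := map_mx (intr : int -> 'F_p) L; set Rp := map_mx (intr : int -> 'F_p) R.
have uLp : Lp \in unitmx by rewrite unitmxE det_map_mx rmorph_unit // -unitmxE.
have uRp : Rp \in unitmx by rewrite unitmxE det_map_mx rmorph_unit // -unitmxE.
have ker_line (u : 'cV_m.+1) : map_mx (intr : int -> 'F_p) M *m u = 0 ->
    Rp *m u = (Rp *m u) ord_max 0 *: delta_mx ord_max 0.
  move=> Mu; set w := Rp *m u.
  have Dw : map_mx intr (diag_mx (\row_i d`_i)) *m w = 0.
    have := congr1 (mulmx (invmx Lp)) Mu.
    by rewrite defM !map_mxM -!mulmxA mulKmx // mulmx0.
  apply/matrixP => i j; rewrite (ord1 j) !mxE eqxx andbT.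
  have [-> | i_max] := eqVneq i ord_max; first by rewrite mulr1.
  move/matrixP: Dw => /(_ i 0); rewrite map_diag_mx mul_diag_mx !mxE mulr0 => /eqP.
  rewrite mulf_eq0 -(dvdz_pcharf (pchar_Fp p_pr)) (negbTE (d_ndvd i i_max)).
  by move/eqP.
move=> x y Mx My x_nz.
have wx_nz : (Rp *m x) ord_max 0 != 0.
  apply: contraNneq x_nz => wx0.
  by rewrite -(mulKmx uRp x) ker_line // wx0 scale0r mulmx0.
exists ((Rp *m y) ord_max 0 / (Rp *m x) ord_max 0).
suff : Rp *m y = Rp *m (((Rp *m y) ord_max 0 / (Rp *m x) ord_max 0) *: x).
  by move/(congr1 (mulmx (invmx Rp))); rewrite !mulKmx.
rewrite -scalemxAr {1}(ker_line y My) {2}(ker_line x Mx) scalerA divfK //.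
Qed.

Lemma skew_adj_converse n (arc : rel 'I_n) :
  skew_adj (converse arc) = (skew_adj arc)^T.
Proof. by apply/matrixP => i j; rewrite !mxE. Qed.

Lemma tr_skew_adj n (arc : rel 'I_n) :
  oriented_graph arc -> (skew_adj arc)^T = - skew_adj arc.
Proof.
case=> _ asym; apply/matrixP => i j; rewrite !mxE.
case a : (arc i j); case b : (arc j i); rewrite ?opprK ?oppr0 //.
by move: (asym _ _ a); rewrite b.
Qed.

Lemma map_mx_intr_inj (R : numDomainType) m k :
  injective (map_mx (intr : int -> R) : 'M_(m, k) -> 'M_(m, k)).
Proof.
move=> A B /matrixP AB; apply/matrixP => i j.
by have := AB i j; rewrite !mxE; apply: intr_inj.
Qed.

Lemma integral_mxP n (A : 'M[rat]_n) :
  integral_mx A -> exists B : 'M[int]_n, map_mx intr B = A.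
Proof.
move=> Aint; have Aint' i j : exists z : int, A i j == z%:~R.
  by have [z ->] := Aint i j; exists z.
exists (\matrix_(i, j) xchoose (Aint' i j)); apply/matrixP => i j.
by rewrite !mxE; apply/esym/eqP/(xchooseP (Aint' i j)).
Qed.

Lemma scaled_orthogonal_relations n (S : 'M[int]_n) (Q0 : 'M[rat]_n)
    (Q : 'M[int]_n) (l : nat) :
  orthogonal_mx Q0 -> regular_mx Q0 ->
  Q0^T *m map_mx intr S *m Q0 = - map_mx intr S ->
  map_mx intr Q = l%:R *: Q0 ->
  [/\ Q^T *m S = - (S *m Q^T), Q^T *m ones int n = l%:R *: ones int n
    & Q^T *m Q = (l ^ 2)%:R%:M].
Proof.
rewrite /orthogonal_mx /regular_mx => Q0tQ0 Q0e Q0S defQ.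
have mapQt : map_mx intr Q^T = l%:R *: Q0^T by rewrite -map_trmx defQ linearZ.
split; apply: (@map_mx_intr_inj rat).
- rewrite map_mxN !map_mxM mapQt -scalemxAl -scalemxAr -scalerN; congr (_ *: _).
  have := congr1 (mulmx^~ Q0^T) Q0S.
  by rewrite -mulmxA (mulmx1C Q0tQ0) mulmx1 mulNmx; apply.
- rewrite map_mxM mapQt map_mxZ rmorph_nat !map_ones -scalemxAl; congr (_ *: _).
  by rewrite -{1}Q0e mulmxA Q0tQ0 mul1mx.
- rewrite map_mxM mapQt defQ map_scalar_mx rmorph_nat natrX expr2.
  by rewrite -scalemxAl -scalemxAr Q0tQ0 scalerA scalemx1.
Qed.

Lemma zero_mod_Fp n p (v : 'cV[int]_n) :
  prime p -> zero_mod p v <-> map_mx (intr : int -> 'F_p) v = 0.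
Proof.
move=> p_pr; rewrite /zero_mod; split => [pv | /matrixP v0 i].
  apply/matrixP => i j; rewrite (ord1 j) !mxE; apply/eqP.
  by rewrite -(dvdz_pcharf (pchar_Fp p_pr)).
by have := v0 i 0; rewrite !mxE => /eqP; rewrite -(dvdz_pcharf (pchar_Fp p_pr)).
Qed.

Lemma walk_det_ndvd n (arc : rel 'I_n) p :
  in_G arc -> prime p -> odd p ->
  ~ ((p ^ 2)%:Z %| \det (walk_matrix (skew_adj arc)))%Z.
Proof.
case=> d [-> [_ d_sqfree]] p_pr p_odd.
have p2_coprime : coprimez (p ^ 2)%:Z (2 ^ n./2)%:Z.
  rewrite /coprimez /=; apply/coprimeXl/coprimeXr.
  by rewrite prime_coprime // dvdn_prime2 //; apply: contraTneq p_odd => ->.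
by rewrite Gauss_dvdzr //; apply: d_sqfree.
Qed.

Theorem lemma3p4 (n : nat) (arc : rel 'I_n)
  (Hor : oriented_graph arc) (HG : in_G arc)
  (Q0 : 'M[rat]_n) (Horth : orthogonal_mx Q0) (Hreg : regular_mx Q0)
  (HQ0 : Q0^T *m map_mx intr (skew_adj arc) *m Q0
         = map_mx intr (skew_adj (converse arc)))
  (l0 : nat) (Hl0 : is_level Q0 l0)
  (p : nat) (Hp : prime p) (Hodd : odd p) (Hpl : ~~ (p %| l0)%N)
  (z : 'cV[int]_n)
  (Hz : zero_mod p ((walk_matrix (skew_adj arc))^T *m z)) :
  zero_mod p ((skew_adj arc)^T *m z).
Proof.
destruct n as [|m]; first by move=> [].
set S := skew_adj arc.
have StS : S^T = - S := tr_skew_adj Hor.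
rewrite skew_adj_converse -/S StS map_mxN in HQ0.
have [_ [/integral_mxP [Q defQ] _]] := Hl0.
have [QS Qe QtQ] := scaled_orthogonal_relations Horth Hreg HQ0 defQ.
have pchar_p := pchar_Fp Hp.
have Wp : map_mx (intr : int -> 'F_p) (walk_matrix S)^T
    = (krylov_mx (map_mx intr S) (ones _ _))^T.
  by rewrite -map_trmx walk_matrixE map_krylov_mx map_ones.
apply: (zero_mod_Fp _ Hp).2; move: ((zero_mod_Fp _ Hp).1 Hz).
rewrite !map_mxM Wp -map_trmx => Wz.
apply: (anticomm_krylov_tr_ker (Q := map_mx intr Q) (c := l0%:R) _ _ _ _ _ Wz).
- by rewrite -(dvdn_pcharf pchar_p) dvdn_prime2 //; apply: contraTneq Hodd => ->.
- rewrite -Wp; apply: (ker_modp_colinear Hp).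
  by rewrite det_tr; exact: walk_det_ndvd HG Hp Hodd.
- by rewrite map_trmx -!map_mxM QS map_mxN.
- by rewrite map_trmx -(map_ones intr) -map_mxM Qe map_mxZ rmorph_nat.
- apply: (proj2 (@mulmx1_unit _ _ ((l0 ^ 2)%:R^-1 *: (map_mx intr Q)^T) _ _)).
  rewrite -scalemxAl map_trmx -map_mxM QtQ map_scalar_mx rmorph_nat scale_scalar_mx.
  by rewrite mulVf // -(dvdn_pcharf pchar_p) Euclid_dvdX // andbT.
Qed.
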